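(* If $f\in\mathcal F$ and $g\in\mathcal M_f$, then $fg\in\mathcal F$.
   Context: $\Lambda=[-\pi,\pi]$. For $h\ge0$, the geometric mean is $G(h)=\exp\{\frac1{2\pi}\int_\Lambda\ln h(\lambda)d\lambda\}$ if $\ln h\in L^1(\Lambda)$ and $G(h)=0$ otherwise. For a spectral density $f$ ($f\ge0$, $f\in L^1(\Lambda)$, positive on a set of positive measure), $\sigma_n^2(f)=\min_{c_1,\dots,c_n\in\mathbb C}\int_\Lambda|1-\sum_{k=1}^n c_ke^{-ik\lambda}|^2f(\lambda)\,d\lambda$ and $\sigma_n(f)=\sqrt{\sigma_n^2(f)}$. $\mathcal F=\{f\in L^1(\Lambda): f\ge0,\ G(f)=0,\ \lim_{n\to\infty}\sigma_{n+1}(f)/\sigma_n(f)=1\}$ (spectral densities of deterministic processes with weakly varying prediction error). For $f\in\mathcal F$, $\mathcal M_f$ is the class of functions $g\ge0$ on $\Lambda$ with $G(g)>0$, $fg\in L^1(\Lambda)$ and $\lim_{n\to\infty}\sigma_n^2(fg)/\sigma_n^2(f)=G(g)$. *)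

From HB Require Import structures.
From mathcomp Require Import all_boot all_order all_algebra.
From mathcomp Require Import all_classical all_reals all_analysis.
Set Implicit Arguments. Unset Strict Implicit. Unset Printing Implicit Defensive.
Import Order.TTheory GRing.Theory Num.Theory.
Import numFieldNormedType.Exports.
Local Open Scope classical_set_scope.
Local Open Scope ring_scope.

Section Spectral.
Variable R : realType.

Definition Lam : set R := `[- pi, pi]%classic.

Definition leb := (@lebesgue_measure R).

Definition L1 (h : R -> R) : Prop := leb.-integrable Lam (EFin \o h).

(* geometric mean: ln h in L^1 requires h > 0 a.e. on Lambda (otherwise
   ln h = -oo on a set of positive measure) *)
Definition lnL1 (h : R -> R) : Prop :=
  {ae leb, forall x, Lam x -> 0 < h x} /\ L1 (fun x => ln (h x)).

Definition G (h : R -> R) : R :=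
  if `[< lnL1 h >] then expR ((2 * pi)^-1 * Rintegral leb Lam (fun x => ln (h x)))
  else 0.

(* |1 - sum_{k=1}^n c_k e^{-i k x}|^2 with c_k = a_k + i b_k, written out:
   c_k e^{-ikx} = (a_k cos kx + b_k sin kx) + i (b_k cos kx - a_k sin kx). *)
Definition trig_err (n : nat) (a b : nat -> R) (x : R) : R :=
  (1 - \sum_(1 <= k < n.+1) (a k * cos (k%:R * x) + b k * sin (k%:R * x))) ^+ 2
  + (\sum_(1 <= k < n.+1) (b k * cos (k%:R * x) - a k * sin (k%:R * x))) ^+ 2.

Definition sigma2 (f : R -> R) (n : nat) : R :=
  inf [set r | exists a b : nat -> R,
         r = Rintegral leb Lam (fun x => trig_err n a b x * f x)].

Definition sigma (f : R -> R) (n : nat) : R := Num.sqrt (sigma2 f n).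

Definition spectral_density (f : R -> R) : Prop :=
  (forall x, Lam x -> 0 <= f x) /\ L1 f /\
  (0 < leb (Lam `&` [set x | (0 < f x)%R]))%E.

Definition classF (f : R -> R) : Prop :=
  spectral_density f /\ G f = 0 /\
  (fun n => sigma f n.+1 / sigma f n) @ \oo --> (1 : R).

Definition classM (f g : R -> R) : Prop :=
  (forall x, Lam x -> 0 <= g x) /\ 0 < G g /\ L1 (fun x => f x * g x) /\
  (fun n => sigma2 (fun x => f x * g x) n / sigma2 f n) @ \oo --> G g.

End Spectral.

From HB Require Import structures.
From mathcomp Require Import all_boot all_order all_algebra.
From mathcomp Require Import all_classical all_reals all_analysis.
From mathcomp Require Import measurable_realfun.
Set Implicit Arguments. Unset Strict Implicit. Unset Printing Implicit Defensive.
Import Order.TTheory GRing.Theory Num.Theory.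
Import numFieldNormedType.Exports.
Local Open Scope classical_set_scope.
Local Open Scope ring_scope.

(* Multiplying f by g rescales the prediction errors: sigma_n^2(fg) is
   asymptotically G(g) sigma_n^2(f) with G(g) > 0, so consecutive ratios of
   sigma_n(fg) differ from those of sigma_n(f) by a factor tending to 1.
   Determinism passes from f to fg because ln f = ln(fg) - ln g almost
   everywhere, so ln(fg) in L^1 together with ln g in L^1 would force ln f in
   L^1; and fg > 0 wherever f > 0, up to the null set where g vanishes. *)

Lemma cvg_succ_ratio1_ratio (R : realFieldType) (u v : R^nat) (c : R) : c != 0 ->
  (fun n => u n / v n) @ \oo --> c ->
  (fun n => v n.+1 / v n) @ \oo --> (1 : R) ->
  (fun n => u n.+1 / u n) @ \oo --> (1 : R).
Proof.
move=> c0 uv v1.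
have uv1 : (fun n => u n.+1 / v n.+1) @ \oo --> c.
  by rewrite (cvg_shiftS (fun n => u n / v n)).
have ratio_eq : \forall n \near \oo,
    u n.+1 / u n = u n.+1 / v n.+1 * (v n.+1 / v n) / (u n / v n).
  near=> n.
  have : v n.+1 / v n != 0 by near: n; exact: cvgr_neq0 v1 (oner_neq0 R).
  rewrite mulf_eq0 invr_eq0 negb_or => /andP[vn1 vn].
  by rewrite invf_div mulrA divfK // mulrA divfK.
suff lim1 : (fun n => u n.+1 / v n.+1 * (v n.+1 / v n) / (u n / v n)) @ \oo --> (1 : R).
  by apply: cvg_trans lim1; apply: near_eq_cvg; apply: filterS ratio_eq => n ->.
rewrite -(divff c0) -{1}[c]mulr1.
by apply: cvgM; [apply: cvgM | apply: cvgV].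
Unshelve. all: by end_near. Qed.

Lemma sqrtr_div (R : rcfType) (x y : R) : 0 <= y ->
  Num.sqrt (x / y) = Num.sqrt x / Num.sqrt y.
Proof. by move=> y0; rewrite mulrC sqrtrM ?invr_ge0 // sqrtrV // mulrC. Qed.

Section ae_lemmas.
Context d (T : measurableType d) (R : realType) (mu : {measure set T -> \bar R}).

Lemma le_measure_ae (A B : set T) : measurable A -> measurable B ->
  {ae mu, forall x, A x -> B x} -> (mu A <= mu B)%E.
Proof.
move=> mA mB [N [mN N0 AB_N]].
rewrite -(measureU0 mB mN N0).
apply: le_measure; rewrite ?inE //; first exact: measurableU.
move=> x Ax; have [Nx|Nx] := pselect (N x); [by right | left].
by apply: contrapT => nBx; apply: Nx; apply: AB_N => /(_ Ax).
Qed.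

Lemma integrable_ae_eq (D : set T) (h1 h2 : T -> R) : measurable D ->
  mu.-integrable D (EFin \o h1) -> measurable_fun D h2 ->
  {ae mu, forall x, D x -> h1 x = h2 x} -> mu.-integrable D (EFin \o h2).
Proof.
move=> mD /integrableP[m1 i1] m2 h12; apply/integrableP; split.
  exact/measurable_EFinP.
rewrite (@ge0_ae_eq_integral _ _ _ mu D (abse \o EFin \o h2) (abse \o EFin \o h1)) //.
- apply/measurable_EFinP; exact: measurableT_comp.
- exact/measurable_EFinP/measurableT_comp/measurable_EFinP.
- by move=> x _; exact: abse_ge0.
- by move=> x _; exact: abse_ge0.
- by apply: filterS h12 => x h Dx /=; rewrite h.
Qed.

End ae_lemmas.

Section spectral.
Variable R : realType.
Implicit Types f g h k : R -> R.

(* [leb] is a plain alias, which the filter hints for [almost_everywhere] do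
   not unfold. *)
#[local] Instance leb_ae_filter : Filter (almost_everywhere (@leb R)) :=
  ae_filter_ringOfSetsType (@lebesgue_measure R).

Lemma measurable_Lam : measurable (@Lam R).
Proof. exact: measurable_itv. Qed.

Lemma measurable_fun_L1 h : L1 h -> measurable_fun (@Lam R) h.
Proof. by move=> /integrableP[+ _] => /measurable_EFinP. Qed.

Lemma measurable_Lam_pos h : L1 h -> measurable (@Lam R `&` [set x | 0 < h x]).
Proof.
move=> /measurable_fun_L1 mh.
rewrite (_ : [set x | 0 < h x] = h @^-1` `]0, +oo[%classic).
  exact: mh measurable_Lam _ (measurable_itv _).
by apply/seteqP; split=> x /=; rewrite in_itv /= andbT.
Qed.

Lemma G_eq0P h : G h = 0 <-> ~ lnL1 h.
Proof.
rewrite /G; case: asboolP => [lnh|nlnh]; last by split.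
by split=> // /eqP; rewrite gt_eqF ?expR_gt0.
Qed.

Lemma G_gt0_lnL1 h : 0 < G h -> lnL1 h.
Proof. by apply: contraPP => /G_eq0P ->; rewrite ltxx. Qed.

Lemma lnL1_divr f g : (forall x, Lam x -> 0 <= f x) -> L1 f ->
  lnL1 (fun x => f x * g x) -> lnL1 g -> lnL1 f.
Proof.
move=> f0 f1 [fg_pos ln_fg] [g_pos ln_g].
have f_pos : {ae @leb R, forall x, Lam x -> 0 < f x}.
  apply: filterS2 fg_pos g_pos => x fgx gx Lx.
  by rewrite -(mulfK (lt0r_neq0 (gx Lx)) (f x)) divr_gt0 ?fgx ?gx.
split=> //.
apply: (@integrable_ae_eq _ _ R (@lebesgue_measure R) (@Lam R)
                         (fun x => ln (f x * g x) - ln (g x))).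
- exact: measurable_Lam.
- by have := integrableB _ ln_fg ln_g; apply; exact: measurable_Lam.
- apply: measurableT_comp; first exact: measurable_ln.
  exact: measurable_fun_L1.
- apply: filterS2 f_pos g_pos => x fx gx Lx.
  by rewrite lnM ?posrE ?fx ?gx // addrK.
Qed.

Lemma sigma2_ge0 h n : (forall x, Lam x -> 0 <= h x) -> 0 <= sigma2 h n.
Proof.
move=> h0; apply: lb_le_inf; first by eexists; exists (fun _ => 0), (fun _ => 0).
move=> _ [a [b ->]]; apply: Rintegral_ge0 => x Lx.
by rewrite mulr_ge0 ?h0 // /trig_err addr_ge0 ?sqr_ge0.
Qed.

Lemma sigma_succ_ratio1 h k (c : R) : 0 < c -> (forall x, Lam x -> 0 <= h x) ->
  (fun n => sigma2 k n / sigma2 h n) @ \oo --> c ->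
  (fun n => sigma h n.+1 / sigma h n) @ \oo --> (1 : R) ->
  (fun n => sigma k n.+1 / sigma k n) @ \oo --> (1 : R).
Proof.
move=> c0 h0 kh h1; apply: (@cvg_succ_ratio1_ratio _ _ _ (Num.sqrt c)) h1.
  by rewrite sqrtr_eq0 -ltNge.
have -> : (fun n => sigma k n / sigma h n) =
          (fun n => Num.sqrt (sigma2 k n / sigma2 h n)).
  by apply/funext => n; rewrite sqrtr_div // sigma2_ge0.
by apply: continuous_cvg kh; exact: sqrt_continuous.
Qed.

Lemma spectral_density_mul f g : spectral_density f ->
  (forall x, Lam x -> 0 <= g x) -> {ae @leb R, forall x, Lam x -> 0 < g x} ->
  L1 (fun x => f x * g x) -> spectral_density (fun x => f x * g x).
Proof.
move=> [f0 [f1 f_pos]] g0 g_pos fg1; split; [|split=> //].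
  by move=> x Lx; rewrite mulr_ge0 ?f0 ?g0.
apply: (lt_le_trans f_pos); apply: le_measure_ae.
- exact: measurable_Lam_pos.
- exact: measurable_Lam_pos.
- by apply: filterS g_pos => x gx [Lx fx]; split=> //=; rewrite mulr_gt0 ?gx.
Qed.

End spectral.

Theorem mainTheorem8 (R : realType) (f g : R -> R) :
  classF f -> classM f g -> classF (fun x => (f x * g x)%R).
Proof.
move=> [f_sd [Gf0 f_ratio]] [g0 [Gg_gt0 [fg1 fg_ratio]]].
have [f0 [f1 _]] := f_sd.
have ln_g := G_gt0_lnL1 Gg_gt0.
split; first exact: spectral_density_mul f_sd g0 ln_g.1 fg1.
split; last exact: sigma_succ_ratio1 Gg_gt0 f0 fg_ratio f_ratio.
apply/G_eq0P => ln_fg; move/G_eq0P: Gf0; apply.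
exact: lnL1_divr f0 f1 ln_fg ln_g.
Qed.
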